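(* For $n\ge1$ let $a_n$ be the number of equivalence classes of period configurations of Parallel Diffusion on the unlabelled complete graph $K_n$. Then $a_1=1$, $a_2=2$, $a_3=6$, $a_4=19$, and $a_n=5a_{n-1}-7a_{n-2}+4a_{n-3}$ for all $n\ge5$.
   Context: Parallel Diffusion on a graph $G$: a configuration assigns an integer stack size $|v|$ to each vertex. One firing step replaces every stack size simultaneously by $|v| + \#\{u\in N(v): |u|>|v|\} - \#\{u\in N(v): |u|<|v|\}$. A period configuration is a configuration $D$ such that repeated firing starting from $D$ returns to $D$ after some positive number of steps. On the complete graph $K_n$ with unlabelled vertices, a configuration is a multiset of $n$ integers. Two configurations are equivalent if one is obtained from the other by adding the same integer to every stack size. *)

From mathcomp Require Import all_boot all_order all_algebra.
Set Implicit Arguments. Unset Strict Implicit. Unset Printing Implicit Defensive.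
Import Order.TTheory GRing.Theory Num.Theory.
Local Open Scope ring_scope.

(* A configuration on the unlabelled complete graph K_n is a multiset of n
   integers, represented by a sequence [s : seq int] of size n taken up to
   permutation ([perm_eq]).  Each entry is the stack size of one vertex. *)

(* One firing step of Parallel Diffusion on K_n: every vertex v gains one
   for each other vertex with a strictly larger stack, and loses one for each
   other vertex with a strictly smaller stack.  (Counting over all of s is the
   same as counting over N(v) = the other vertices, since v itself is neither
   strictly larger nor strictly smaller than itself.) *)
Definition pd_fire (s : seq int) : seq int :=
  [seq x + (count (fun y => x < y) s)%:R - (count (fun y => y < x) s)%:R
  | x <- s].

Definition pd_period (s : seq int) : Prop :=
  exists k : nat, (0 < k)%N /\ perm_eq (iter k pd_fire s) s.

Definition pd_equiv (s t : seq int) : Prop :=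
  exists c : int, perm_eq t [seq x + c | x <- s].

Definition pd_num_classes (n k : nat) : Prop :=
  exists reps : seq (seq int),
    [/\ size reps = k,
        (forall r, r \in reps -> size r = n /\ pd_period r),
        (forall i j, (i < k)%N -> (j < k)%N -> i <> j ->
           ~ pd_equiv (nth [::] reps i) (nth [::] reps j)) &
        (forall s : seq int, size s = n -> pd_period s ->
           exists2 r, r \in reps & pd_equiv s r)].

(* Write fire_at s x = x + #{y in s | y > x} - #{y in s | y < x}, so that
   firing is pd_fire s = map (fire_at s) s.
   1. A configuration is a period configuration iff it is order reversing:
      firing strictly reverses the order of any two of its values.  Such a
      configuration has period 2.  Conversely, the energy 2 Σ x^2 - Σ Σ |x - y|
      never increases and drops strictly when some pair keeps its order, while
      the number of distinct values drops when a pair merges; along a period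
      neither can drop.
   2. Each class has a unique canonical member, sorted with minimum 0.  A
      canonical order-reversing configuration with m zeros is either all zeros
      or m zeros below a smaller one t raised by a gap 1 <= g < m + zeros t.
      This yields a duplicate-free recursive list [reps n] of representatives.
   3. With S n = #reps n and Z n the total number of zeros in reps n, the
      decomposition gives two convolution identities; taking differences
      eliminates the convolutions and leaves the stated recurrence for S. *)

From mathcomp Require Import all_boot all_order all_algebra.
From mathcomp Require Import zify ring.
Import Order.TTheory GRing.Theory Num.Theory.
Set Implicit Arguments. Unset Strict Implicit.
Local Open Scope ring_scope.

Definition fire_at (s : seq int) (x : int) : int :=
  x + (count (fun y => x < y) s)%:R - (count (fun y => y < x) s)%:R.

Lemma pd_fireE s : pd_fire s = map (fire_at s) s.
Proof. by []. Qed.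

(* [s] is order reversing when firing strictly reverses the order of any two
   of its values; these turn out to be exactly the period configurations. *)
Definition order_reversing (s : seq int) : Prop :=
  forall x y, x \in s -> y \in s -> x < y -> fire_at s y < fire_at s x.

(* Firing an order-reversing configuration twice restores it: the vertices
   above and below a given one are exchanged, so the moves cancel. *)
Lemma pd_fire_twice s : order_reversing s -> pd_fire (pd_fire s) = s.
Proof.
move=> rev_s; rewrite !pd_fireE -map_comp -[RHS]map_id.
apply/eq_in_map => x xs /=; rewrite /fire_at !count_map.
have -> : count (preim (fire_at s) (fun y => fire_at s x < y)) s
          = count (fun y => y < x) s.
  apply: eq_in_count => z zs /=; case: (ltgtP z x) => zx.
  - by rewrite rev_s.
  - by apply/negbTE; rewrite -leNgt ltW // rev_s.
  - by rewrite zx ltxx.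
have -> : count (preim (fire_at s) (fun y => y < fire_at s x)) s
          = count (fun y => x < y) s.
  apply: eq_in_count => z zs /=; case: (ltgtP z x) => zx.
  - by apply/negbTE; rewrite -leNgt ltW // rev_s.
  - by rewrite rev_s.
  - by rewrite zx ltxx.
rewrite /fire_at; ring.
Qed.

Lemma order_reversing_period s : order_reversing s -> pd_period s.
Proof. by move=> rev_s; exists 2%N; rewrite /= pd_fire_twice. Qed.

Definition pull (s : seq int) (x : int) : int := \sum_(y <- s) Num.sg (y - x).

Lemma fire_atE s x : fire_at s x = x + pull s x.
Proof.
rewrite /fire_at -addrA; congr (_ + _); rewrite /pull.
elim: s => [|z s IH]; first by rewrite big_nil.
rewrite big_cons /= -IH !natrD; case: (ltgtP z x) => zx.
- by rewrite ltr0_sg ?subr_lt0 //=; ring.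
- by rewrite gtr0_sg ?subr_gt0 //=; ring.
- by rewrite zx subrr sgr0 /=; ring.
Qed.

(* Antisymmetry of the signs: a double sum against [sg (y - x)] collapses. *)
Lemma double_sum_sg (s : seq int) (h : int -> int) :
  \sum_(x <- s) \sum_(y <- s) (h x - h y) * Num.sg (y - x)
  = 2 * \sum_(x <- s) h x * pull s x.
Proof.
have hx : \sum_(x <- s) \sum_(y <- s) h x * Num.sg (y - x)
          = \sum_(x <- s) h x * pull s x.
  by apply: eq_bigr => x _; rewrite /pull mulr_sumr.
have hy : \sum_(x <- s) \sum_(y <- s) h y * Num.sg (y - x)
          = - \sum_(x <- s) h x * pull s x.
  rewrite exchange_big -hx -sumrN; apply: eq_bigr => x _; rewrite -sumrN.
  by apply: eq_bigr => y _; rewrite -mulrN -sgrN opprB.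
have -> : \sum_(x <- s) \sum_(y <- s) (h x - h y) * Num.sg (y - x)
  = \sum_(x <- s) \sum_(y <- s) h x * Num.sg (y - x)
    - \sum_(x <- s) \sum_(y <- s) h y * Num.sg (y - x).
  rewrite -sumrB; apply: eq_bigr => x _; rewrite -sumrB.
  by apply: eq_bigr => y _; rewrite mulrBl.
rewrite hx hy; ring.
Qed.

Definition energy (s : seq int) : int :=
  2 * \sum_(x <- s) x ^+ 2 - \sum_(x <- s) \sum_(y <- s) `|x - y|.

(* How far the pair of values [x], [y] fails to be reversed by firing. *)
Definition defect (s : seq int) (x y : int) : int :=
  `|fire_at s x - fire_at s y| - (fire_at s x - fire_at s y) * Num.sg (y - x).

Lemma defect_ge0 s x y : 0 <= defect s x y.
Proof.
rewrite /defect subr_ge0; case: (ltgtP y x) => yx.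
- by rewrite ltr0_sg ?subr_lt0 // mulrN1 -normrN ler_norm.
- by rewrite gtr0_sg ?subr_gt0 // mulr1 ler_norm.
- by rewrite yx !subrr normr0 mulr0.
Qed.

Lemma defect_gt0 s x y :
  x < y -> fire_at s x < fire_at s y -> 0 < defect s x y.
Proof.
move=> xy fxy; rewrite /defect gtr0_sg ?subr_gt0 // mulr1.
rewrite ltr0_norm ?subr_lt0 //; lia.
Qed.

Lemma energy_fire s :
  energy (pd_fire s) = energy s - \sum_(x <- s) \sum_(y <- s) defect s x y.
Proof.
rewrite pd_fireE /energy !big_map.
under [X in _ - X = _]eq_bigr do rewrite big_map.
have dist_s : \sum_(x <- s) \sum_(y <- s) `|x - y|
              = - (2 * \sum_(x <- s) x * pull s x).
  rewrite -(double_sum_sg s id) -sumrN; apply: eq_bigr => x _; rewrite -sumrN.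
  apply: eq_bigr => y _ /=; case: (ltgtP x y) => xy.
  - by rewrite gtr0_sg ?subr_gt0 // ltr0_norm ?subr_lt0 //; ring.
  - by rewrite ltr0_sg ?subr_lt0 // gtr0_norm ?subr_gt0 //; ring.
  - by rewrite xy !subrr normr0 mul0r oppr0.
have dist_fire : \sum_(x <- s) \sum_(y <- s) `|fire_at s x - fire_at s y|
    = \sum_(x <- s) \sum_(y <- s) defect s x y
      + 2 * \sum_(x <- s) fire_at s x * pull s x.
  rewrite -(double_sum_sg s (fire_at s)) -big_split; apply: eq_bigr => x _ /=.
  rewrite -big_split; apply: eq_bigr => y _ /=; rewrite /defect; ring.
have sq_fire : \sum_(x <- s) fire_at s x ^+ 2 = \sum_(x <- s) x ^+ 2
    + 2 * \sum_(x <- s) x * pull s x + \sum_(x <- s) pull s x ^+ 2.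
  rewrite mulr_sumr -!big_split; apply: eq_bigr => x _ /=; rewrite fire_atE; ring.
have mix_fire : \sum_(x <- s) fire_at s x * pull s x
    = \sum_(x <- s) x * pull s x + \sum_(x <- s) pull s x ^+ 2.
  rewrite -big_split; apply: eq_bigr => x _ /=; rewrite fire_atE; ring.
rewrite dist_fire sq_fire mix_fire dist_s; ring.
Qed.

Lemma energy_fire_le s : energy (pd_fire s) <= energy s.
Proof.
rewrite energy_fire gerBl; apply: sumr_ge0 => x _; apply: sumr_ge0 => y _.
exact: defect_ge0.
Qed.

Lemma energy_fire_lt s x y : x \in s -> y \in s -> x < y ->
  fire_at s x < fire_at s y -> energy (pd_fire s) < energy s.
Proof.
move=> xs ys xy fxy; rewrite energy_fire gtrBl.
have inner_ge0 z : 0 <= \sum_(w <- s) defect s z w.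
  by apply: sumr_ge0 => w _; apply: defect_ge0.
rewrite lt_def sumr_ge0 // andbT psumr_neq0 //; apply/hasP; exists x => //=.
rewrite lt_def inner_ge0 andbT psumr_neq0 // => [|*]; last exact: defect_ge0.
by apply/hasP; exists y => //=; apply: defect_gt0.
Qed.

Lemma energy_perm s t : perm_eq s t -> energy s = energy t.
Proof.
move=> pst; rewrite /energy (perm_big _ pst) [in LHS](perm_big _ pst).
by congr (_ - _); apply: eq_bigr => x _; apply: perm_big.
Qed.

Definition nvalues (s : seq int) : nat := size (undup s).

Lemma nvalues_perm s t : perm_eq s t -> nvalues s = nvalues t.
Proof. by move=> pst; apply/perm_size/perm_undup/perm_mem. Qed.

Lemma nvalues_map (f : int -> int) s : (nvalues (map f s) <= nvalues s)%N.
Proof.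
rewrite /nvalues -(size_map f (undup s)); apply: uniq_leq_size => [|y].
  exact: undup_uniq.
by rewrite mem_undup => /mapP [x xs ->]; rewrite map_f // mem_undup.
Qed.

Lemma nvalues_map_lt (f : int -> int) s x y : x \in s -> y \in s -> x != y ->
  f x = f y -> (nvalues (map f s) < nvalues s)%N.
Proof.
move=> xs ys xy fxy; rewrite ltn_neqAle nvalues_map andbT.
have not_uniq : ~~ uniq (map f (undup s)).
  have xu : x \in undup s by rewrite mem_undup.
  rewrite (perm_uniq (perm_map f (perm_to_rem xu))) /= negb_and negbK.
  apply/orP; left; rewrite fxy map_f // mem_rem_uniq ?undup_uniq //.
  by rewrite inE eq_sym xy mem_undup.
apply: contra not_uniq => /eqP same_n.
apply: (leq_size_uniq (undup_uniq (map f s))).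
  by move=> z; rewrite mem_undup => /mapP [w ws ->]; rewrite map_f ?mem_undup.
by rewrite size_map -/(nvalues s) -same_n.
Qed.

Lemma nvalues_iter k s : (nvalues (iter k pd_fire s) <= nvalues s)%N.
Proof.
elim: k => [|k IH] //=; apply: leq_trans IH; rewrite pd_fireE; exact: nvalues_map.
Qed.

Lemma energy_iter k s : energy (iter k pd_fire s) <= energy s.
Proof. by elim: k => [|k IH] //=; apply: le_trans (energy_fire_le _) IH. Qed.

(* Along a period neither the energy nor [nvalues] can drop, so firing can
   neither keep nor merge any pair of values: it must reverse them. *)
Lemma period_order_reversing s : pd_period s -> order_reversing s.
Proof.
case=> [[|k] [// _]]; rewrite iterSr => cycle_s.
have energy_eq : energy s <= energy (pd_fire s).
  by rewrite -(energy_perm cycle_s) energy_iter.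
have nvalues_eq : (nvalues s <= nvalues (pd_fire s))%N.
  by rewrite -(nvalues_perm cycle_s) nvalues_iter.
move=> x y xs ys xy; case: (ltgtP (fire_at s y) (fire_at s x)) => // fxy.
- by move: energy_eq; rewrite leNgt (energy_fire_lt xs ys).
- move: nvalues_eq; rewrite leqNgt pd_fireE (nvalues_map_lt xs ys) //.
  by rewrite lt_eqF.
Qed.

Definition zeros (t : seq int) : nat := count_mem 0 t.

Definition stack (m g : nat) (t : seq int) : seq int :=
  nseq m 0 ++ map (fun x => x + g%:Z) t.

Definition canonical (t : seq int) : bool := sorted <=%R t && (head 1 t == 0).

Lemma canonical_ge0 t : canonical t -> all (fun x => 0 <= x) t.
Proof.
case/andP; case: t => [|x t] //= sorted_t /eqP x0; rewrite x0 lexx /=.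
by move: sorted_t; rewrite x0 (path_sortedE le_trans) => /andP [].
Qed.

Lemma canonical_mem0 t : canonical t -> 0 \in t.
Proof. by case/andP; case: t => [|x t] // _ /= /eqP ->; rewrite mem_head. Qed.

Lemma sorted_zeros_cat m (L : seq int) : sorted <=%R L -> all (>= 0) L ->
  sorted <=%R (nseq m 0 ++ L).
Proof.
move=> sorted_L L_ge0; elim: m => [//|m IH] /=.
rewrite (path_sortedE le_trans) IH andbT all_cat L_ge0 andbT.
by apply/allP => x /nseqP [-> _].
Qed.

Lemma canonical_nseq n : (0 < n)%N -> canonical (nseq n 0).
Proof.
case: n => // n _; apply/andP; split => //.
by have := @sorted_zeros_cat n.+1 [::] isT isT; rewrite cats0.
Qed.

Lemma order_reversing_nseq n : order_reversing (nseq n 0).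
Proof. by move=> x y /nseqP [-> _] /nseqP [-> _]; rewrite ltxx. Qed.

Lemma size_stack m g t : size (stack m g t) = (m + size t)%N.
Proof. by rewrite /stack size_cat size_nseq size_map. Qed.

Lemma canonical_stack m g t : (0 < m)%N -> canonical t -> canonical (stack m g t).
Proof.
move=> m_gt0 can_t; apply/andP; split; last by case: m m_gt0.
apply: sorted_zeros_cat.
  rewrite sorted_map; apply: sub_sorted (proj1 (andP can_t)) => x y /=.
  by rewrite lerD2r.
apply/allP => _ /mapP [z zt ->]; apply: addr_ge0 => //.
exact: (allP (canonical_ge0 can_t)).
Qed.

Lemma raised_gt0 (g : nat) t z : all (>= 0) t -> (0 < g)%N -> z \in t ->
  0 < z + g%:Z.
Proof. by move=> t_ge0 g_gt0 zt; rewrite ltr_wpDl ?(allP t_ge0) ?ltz_nat. Qed.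

Lemma zeros_stack m g t : (0 < g)%N -> canonical t -> zeros (stack m g t) = m.
Proof.
move=> g_gt0 can_t; rewrite /zeros count_cat count_nseq /= mul1n.
rewrite -[RHS]addn0; congr (_ + _)%N; apply/eqP; rewrite -leqn0 leqNgt -has_count.
apply/hasPn => _ /mapP [z zt ->] /=.
by rewrite gt_eqF // (raised_gt0 (canonical_ge0 can_t)).
Qed.

Lemma fire_at_stack m g t z : all (>= 0) t -> (0 < g)%N -> z \in t ->
  fire_at (stack m g t) (z + g%:Z) = fire_at t z + g%:Z - m%:Z.
Proof.
move=> t_ge0 g_gt0 zt; have zg_gt0 := raised_gt0 t_ge0 g_gt0 zt.
rewrite /fire_at /stack !count_cat !count_nseq !count_map /=.
rewrite zg_gt0 (lt_gtF zg_gt0) mul0n mul1n add0n.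
under eq_count do rewrite /= ltrD2r.
under [count (preim _ _) _]eq_count do rewrite /= ltrD2r.
rewrite natrD; ring.
Qed.

Lemma fire_at_stack0 m g t : all (>= 0) t -> (0 < g)%N ->
  fire_at (stack m g t) 0 = (size t)%:Z.
Proof.
move=> t_ge0 g_gt0; rewrite /fire_at /stack !count_cat !count_nseq !count_map.
rewrite /= !mul0n !add0n add0r.
have -> : count (preim (fun x => x + g%:Z) (> 0)) t = size t.
  by apply/eqP; rewrite -all_count; apply/allP => z zt /=; exact: raised_gt0 t_ge0 g_gt0 zt.
have -> : count (preim (fun x => x + g%:Z) (< 0)) t = 0%N.
  apply/eqP; rewrite -leqn0 leqNgt -has_count; apply/hasPn => z zt /=.
  by rewrite lt_gtF ?(raised_gt0 t_ge0 g_gt0 zt).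
by rewrite subr0 natz.
Qed.

Lemma fire_at_canonical0 t : canonical t -> fire_at t 0 = (size t)%:Z - (zeros t)%:Z.
Proof.
move=> can_t; have t_ge0 := canonical_ge0 can_t.
rewrite /fire_at add0r -(count_predC (> 0) t) /zeros.
have -> : count (< 0) t = 0%N.
  apply/eqP; rewrite -leqn0 leqNgt -has_count; apply/hasPn => y yt /=.
  by rewrite -leNgt (allP t_ge0).
have -> : count (predC (> 0)) t = count_mem 0 t.
  apply: eq_in_count => y yt /=; rewrite lt_def (allP t_ge0) // andbT negbK.
  by rewrite eq_sym.
by rewrite subr0 PoszD addrK natz.
Qed.

(* Raising [t] by [g] over [m] zeros keeps it order reversing exactly when
   [t] is, and the gap is smaller than the total number of zeros: the lowest
   raised vertices must fall strictly below the rising zeros. *)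
Lemma stack_order_reversingP m g t : (0 < m)%N -> (0 < g)%N -> canonical t ->
  order_reversing (stack m g t) <-> order_reversing t /\ (g < m + zeros t)%N.
Proof.
move=> m_gt0 g_gt0 can_t; have t_ge0 := canonical_ge0 can_t.
have mem_stack x : (x \in stack m g t) = (x == 0) || (x \in map (fun z => z + g%:Z) t).
  by rewrite mem_cat mem_nseq m_gt0.
have raised_mem z : z \in t -> z + g%:Z \in stack m g t.
  by move=> zt; rewrite mem_stack (map_f (fun z => z + g%:Z)) ?orbT.
split=> [rev_s | [rev_t g_small] x y].
  split=> [x y xt yt xy | ].
    have := rev_s _ _ (raised_mem _ xt) (raised_mem _ yt).
    by rewrite ltrD2r !fire_at_stack // !ltrD2r; apply.
  have gt := raised_mem _ (canonical_mem0 can_t); rewrite add0r in gt.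
  have := rev_s 0 g%:Z; rewrite mem_stack eqxx ltz_nat => /(_ isT gt g_gt0).
  have := fire_at_stack m t_ge0 g_gt0 (canonical_mem0 can_t); rewrite add0r => ->.
  rewrite fire_at_stack0 // fire_at_canonical0 //.
  set n := size t; lia.
rewrite !mem_stack.
case/orP=> [/eqP -> | /mapP [zx zxt ->]]; case/orP=> [/eqP -> | /mapP [zy zyt ->]].
- by rewrite ltxx.
- move=> _; rewrite fire_at_stack // fire_at_stack0 //.
  have : fire_at t zy <= fire_at t 0.
    have := allP t_ge0 _ zyt; rewrite le_eqVlt => /orP [/eqP <- // | zy_gt0].
    by rewrite ltW // rev_t ?canonical_mem0.
  rewrite fire_at_canonical0 //; set n := size t; lia.
- by move=> zx_neg; have := raised_gt0 t_ge0 g_gt0 zxt; rewrite ltNge ltW.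
- by rewrite ltrD2r !fire_at_stack // !ltrD2r; apply: rev_t.
Qed.

Lemma sorted_zeros_split t : sorted <=%R t -> all (>= 0) t ->
  t = nseq (zeros t) 0 ++ filter (> 0) t.
Proof.
elim: t => [//|x t IH] sorted_xt /andP [x_ge0 t_ge0].
have sorted_t : sorted <=%R t := path_sorted sorted_xt.
rewrite /zeros /=; case: (ltgtP x 0) => [x_neg | x_pos | ->].
- by move: x_ge0; rewrite leNgt x_neg.
- have t_pos : all (> 0) t.
    apply/allP => y yt; apply: lt_le_trans x_pos _.
    by move: sorted_xt; rewrite /= (path_sortedE le_trans) => /andP [/allP ->].
  have -> : count_mem 0 t = 0%N.
    apply/eqP; rewrite -leqn0 leqNgt -has_count; apply/hasPn => y yt /=.
    by rewrite gt_eqF ?(allP t_pos).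
  by move/all_filterP: t_pos => ->.
- by rewrite /= -IH.
Qed.

Lemma canonical_unstack t : canonical t -> (zeros t < size t)%N ->
  exists g t', [/\ (0 < g)%N, canonical t' & t = stack (zeros t) g t'].
Proof.
move=> can_t zeros_lt; have t_ge0 := canonical_ge0 can_t.
have split_t := sorted_zeros_split (proj1 (andP can_t)) t_ge0.
have : all (> 0) (filter (> 0) t) by apply: filter_all.
have : sorted <=%R (filter (> 0) t).
  by apply: sorted_filter => //; [apply: le_trans | case/andP: can_t].
move: split_t zeros_lt; case: (filter (> 0) t) => [|x rest] split_t.
  by rewrite [in X in (_ < X)%N]split_t cats0 size_nseq ltnn.
move=> _ sorted_rest /andP [x_gt0 _].
exists `|x|%N, [seq y - x | y <- x :: rest]; split.
- by rewrite -ltz_nat gtz0_abs.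
- apply/andP; split; last by rewrite /= subrr.
  by rewrite sorted_map; apply: sub_sorted sorted_rest => y z /=; rewrite lerD2r.
- rewrite [LHS]split_t /stack -map_comp gtz0_abs //.
  by congr (_ ++ _); rewrite -[LHS]map_id; apply: eq_map => y /=; rewrite subrK.
Qed.

Lemma stack_inj m g1 g2 t1 t2 : canonical t1 -> canonical t2 ->
  stack m g1 t1 = stack m g2 t2 -> g1 = g2 /\ t1 = t2.
Proof.
move=> can1 can2 /eqP; rewrite /stack eqseq_cat // => /andP [_ /eqP].
case: t1 can1 => [|x1 t1] /andP [_ /eqP] // /= ->.
case: t2 can2 => [|x2 t2] /andP [_ /eqP] // /= -> [/eqP].
rewrite !add0n => /eqP <- eq_t; split=> //; congr (_ :: _).
by apply: inj_map eq_t; apply: addIr.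
Qed.

Definition with_zeros (rec : nat -> seq (seq int)) (n m : nat) : seq (seq int) :=
  (if m == n then [:: nseq n 0] else [::]) ++
  [seq stack m g t | t <- rec (n - m)%N, g <- iota 1 (m + zeros t).-1].

(* The recursion on the size, with [f] bounding its depth. *)
Fixpoint reps_upto (f n : nat) : seq (seq int) :=
  if f is f'.+1 then [seq t | m <- iota 1 n, t <- with_zeros (reps_upto f') n m]
  else [::].

Lemma reps_uptoS f n :
  reps_upto f.+1 n = [seq t | m <- iota 1 n, t <- with_zeros (reps_upto f) n m].
Proof. by []. Qed.

Definition reps (n : nat) : seq (seq int) := reps_upto n n.

Lemma reps_upto_enough f1 f2 n : (n <= f1)%N -> (n <= f2)%N ->
  reps_upto f1 n = reps_upto f2 n.
Proof.
elim: f1 f2 n => [|f1 IH] [|f2] [|n] // n_le1 n_le2; rewrite !reps_uptoS.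
congr flatten; apply/eq_in_map => m; rewrite mem_iota => /andP [m_gt0 _].
by rewrite /with_zeros (IH f2) //; lia.
Qed.

Lemma reps_unfold n : (0 < n)%N ->
  reps n = [seq t | m <- iota 1 n, t <- with_zeros reps n m].
Proof.
case: n => // n _; rewrite /reps reps_uptoS; congr flatten; apply/eq_in_map => m.
rewrite mem_iota => /andP [m_gt0 _].
by rewrite /with_zeros (@reps_upto_enough n (n.+1 - m)) // leq_subLR -add1n leq_add.
Qed.

Lemma reps_spec n t :
  t \in reps n <-> [/\ size t = n, canonical t & order_reversing t].
Proof.
elim/ltn_ind: n t => n IH t; case: (posnP n) => [-> | n_gt0].
  by split=> [// | [/size0nil -> /andP []]].
rewrite reps_unfold //; split.
  case/allpairsPdep=> m [u [/[!mem_iota] /andP [m_gt0 m_le] + ->]].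
  rewrite mem_cat => /orP [].
    case: eqP => // _ /[!inE] /eqP ->.
    by split; [apply: size_nseq | apply: canonical_nseq | apply: order_reversing_nseq].
  case/allpairsPdep=> t' [g [t'_in g_in ->]].
  have lt_nm : (n - m < n)%N by lia.
  have [size_t' can_t' rev_t'] := (IH _ lt_nm t').1 t'_in.
  move: g_in; rewrite mem_iota => /andP [g_gt0 g_lt].
  split; first by rewrite size_stack size_t' subnKC.
    exact: canonical_stack.
  by apply/stack_order_reversingP => //; split=> //; lia.
case=> size_t can_t rev_t; set m := zeros t.
have m_gt0 : (0 < m)%N by rewrite -has_count has_pred1 canonical_mem0.
have m_le : (m <= n)%N by rewrite -size_t count_size.
apply/allpairsPdep; exists m, t; split=> //; first by rewrite mem_iota m_gt0 add1n.
rewrite mem_cat; case: eqP => [m_eq | m_neq].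
  have -> : t = nseq n 0.
    rewrite -size_t; apply/all_pred1P.
    by rewrite all_count -/(zeros t) -/m m_eq size_t.
  by rewrite mem_head.
have [|g [t' [g_gt0 can_t' t_eq]]] := canonical_unstack can_t; first by rewrite -/m size_t; lia.
have size_t' : size t' = (n - m)%N by rewrite -size_t t_eq size_stack addKn.
move: rev_t; rewrite t_eq => /stack_order_reversingP [] // rev_t' g_lt.
have lt_nm : (n - m < n)%N by lia.
have t'_in := (IH _ lt_nm t').2 (And3 size_t' can_t' rev_t').
apply/orP; right; apply/allpairsPdep; exists t', g; split=> //.
by rewrite mem_iota; lia.
Qed.

Lemma zeros_with_zeros n m t : (0 < m)%N -> t \in with_zeros reps n m -> zeros t = m.
Proof.
move=> m_gt0; rewrite mem_cat => /orP [].
  by case: eqP => // -> /[!inE] /eqP ->; rewrite /zeros count_nseq /= mul1n.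
case/allpairsPdep=> t' [g [/reps_spec [_ can_t' _] /[!mem_iota] /andP [g_gt0 _] ->]].
exact: zeros_stack.
Qed.

Lemma uniq_allpairs_inj (A B C : eqType) (f : A -> B -> C) (s : seq A)
    (t : A -> seq B) :
  uniq s -> {in s, forall x, uniq (t x)} ->
  (forall x1 x2 y1 y2, x1 \in s -> x2 \in s -> y1 \in t x1 -> y2 \in t x2 ->
     f x1 y1 = f x2 y2 -> x1 = x2 /\ y1 = y2) ->
  uniq [seq f x y | x <- s, y <- t x].
Proof.
move=> uniq_s uniq_t f_inj; apply: allpairs_uniq_dep => // [[x1 y1] [x2 y2]].
move=> /allpairsPdep [a1 [b1 [a1s b1t [-> ->]]]].
move=> /allpairsPdep [a2 [b2 [a2s b2t [-> ->]]]] /= eq_f.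
by have [-> ->] := f_inj _ _ _ _ a1s a2s b1t b2t eq_f.
Qed.

Lemma uniq_reps n : uniq (reps n).
Proof.
elim/ltn_ind: n => n IH; case: (posnP n) => [-> // | n_gt0].
rewrite reps_unfold //; apply: uniq_allpairs_inj; first exact: iota_uniq.
  move=> m /[!mem_iota] /andP [m_gt0 _]; rewrite cat_uniq; apply/and3P; split.
  - by case: (m == n).
  - case: eqP => [-> | _] /=; last by apply/hasPn.
    by rewrite subnn /reps.
  - apply: uniq_allpairs_inj => [| t _ | ]; [apply: IH; lia | exact: iota_uniq |].
    move=> t1 t2 g1 g2 /reps_spec [_ can1 _] /reps_spec [_ can2 _] _ _.
    by case/(stack_inj can1 can2) => -> ->.
move=> m1 m2 t1 t2 /[!mem_iota] /andP [m1_gt0 _] /andP [m2_gt0 _] t1_in t2_in eq_t.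
rewrite -eq_t in t2_in; split=> //.
by rewrite -(zeros_with_zeros m1_gt0 t1_in) (zeros_with_zeros m2_gt0 t2_in).
Qed.

Lemma fire_at_perm s t x : perm_eq s t -> fire_at s x = fire_at t x.
Proof. by move/permP=> count_st; rewrite /fire_at !count_st. Qed.

Lemma order_reversing_perm s t : perm_eq s t -> order_reversing s -> order_reversing t.
Proof.
move=> pst rev_s x y xt yt xy; rewrite -!(fire_at_perm _ pst).
by apply: rev_s; rewrite ?(perm_mem pst).
Qed.

Lemma fire_at_translate s c x :
  fire_at (map (fun y => y + c) s) (x + c) = fire_at s x + c.
Proof.
rewrite /fire_at !count_map.
under eq_count do rewrite /= ltrD2r.
under [count (preim _ _) _]eq_count do rewrite /= ltrD2r.
ring.
Qed.

Lemma order_reversing_translate s c :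
  order_reversing s -> order_reversing (map (fun y => y + c) s).
Proof.
move=> rev_s _ _ /mapP [x xs ->] /mapP [y ys ->]; rewrite ltrD2r => xy.
by rewrite !fire_at_translate ltrD2r rev_s.
Qed.

Lemma canonical_equiv u v : canonical u -> canonical v -> pd_equiv u v -> u = v.
Proof.
move=> /andP [sorted_u /eqP head_u] /andP [sorted_v /eqP head_v] [c perm_vu].
have sorted_uc : sorted <=%R (map (fun x => x + c) u).
  by rewrite sorted_map; apply: sub_sorted sorted_u => x y /=; rewrite lerD2r.
have v_eq := sorted_eq le_trans le_anti sorted_v sorted_uc perm_vu.
have c0 : c = 0.
  move: head_v; rewrite v_eq; case: u head_u {v_eq sorted_uc perm_vu sorted_u} => //=.
  by move=> x u -> /[!add0r].
by rewrite v_eq c0 map_id_in // => x _; rewrite addr0.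
Qed.

Lemma canonical_translate_sort s : s != [::] ->
  exists c, canonical (map (fun x => x + c) (sort <=%R s)).
Proof.
move=> s_nil; have sorted_s : sorted <=%R (sort <=%R s) := sort_sorted le_total s.
have : sort <=%R s != [::] by rewrite -size_eq0 size_sort size_eq0.
case: (sort <=%R s) sorted_s => // x t sorted_xt _; exists (- x).
apply/andP; split; last by rewrite /= subrr.
by rewrite sorted_map; apply: sub_sorted sorted_xt => y z /=; rewrite lerD2r.
Qed.

Lemma pd_num_classes_reps n : (0 < n)%N -> pd_num_classes n (size (reps n)).
Proof.
move=> n_gt0; exists (reps n); split=> //.
- by move=> r /reps_spec [size_r _ /order_reversing_period].
- move=> i j lt_i lt_j neq_ij /canonical_equiv eq_ij; apply: neq_ij.
  have [_ can_i _] := (reps_spec n _).1 (mem_nth [::] lt_i).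
  have [_ can_j _] := (reps_spec n _).1 (mem_nth [::] lt_j).
  by apply/eqP; rewrite -(nth_uniq [::] lt_i lt_j (uniq_reps n)) eq_ij.
- move=> s size_s /period_order_reversing rev_s.
  have [|c can_r] := @canonical_translate_sort s; first by rewrite -size_eq0 size_s -lt0n.
  have perm_s : perm_eq (sort <=%R s) s by rewrite perm_sort.
  exists (map (fun x => x + c) (sort <=%R s)); last by exists c; apply: perm_map.
  apply/reps_spec; split=> //; first by rewrite size_map size_sort.
  by apply/order_reversing_translate/(order_reversing_perm _ rev_s); rewrite perm_sym.
Qed.

Section Counting.
Local Open Scope nat_scope.

Definition nreps (n : nat) : nat := size (reps n).
Definition nzeros (n : nat) : nat := \sum_(t <- reps n) zeros t.

Definition conv (w Y : nat -> nat) (n : nat) : nat :=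
  \sum_(m <- iota 1 n) w m * Y (n - m).

(* A configuration with [m] zeros either is all zeros, or is one of the
   [(m - 1) + zeros t] admissible stacks of a smaller class [t]. *)
Lemma size_with_zeros n m : 0 < m ->
  size (with_zeros reps n m) = (m == n) + (m.-1 * nreps (n - m) + nzeros (n - m)).
Proof.
move=> m_gt0; rewrite size_cat size_allpairs_dep; congr (_ + _).
  by case: (m == n).
rewrite sumnE big_map /nreps -sum1_size big_distrr -big_split /=.
by apply: eq_bigr => t _; rewrite size_iota; lia.
Qed.

Lemma sum_iota_last n (F : nat -> nat) : 0 < n ->
  \sum_(m <- iota 1 n) (m == n) * F m = F n.
Proof.
move=> n_gt0; have n_in : n \in iota 1 n by rewrite mem_iota; lia.
rewrite (bigD1_seq n n_in (iota_uniq 1 n)) /= eqxx mul1n big1 ?addn0 //.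
by move=> m /negbTE ->.
Qed.

Lemma nreps_rec n : 0 < n ->
  nreps n = 1 + conv predn nreps n + conv (fun=> 1) nzeros n.
Proof.
move=> n_gt0; rewrite {1}/nreps reps_unfold // size_allpairs_dep sumnE big_map.
rewrite (eq_big_seq (fun m => (m == n) * 1 + (m.-1 * nreps (n - m) + 1 * nzeros (n - m)))).
  by rewrite big_split sum_iota_last // big_split.
by move=> m /[!mem_iota] /andP [m_gt0 _]; rewrite size_with_zeros // muln1 mul1n.
Qed.

Lemma nzeros_rec n : 0 < n ->
  nzeros n = n + conv (fun m => m * m.-1) nreps n + conv id nzeros n.
Proof.
move=> n_gt0; rewrite {1}/nzeros reps_unfold // big_allpairs_dep.
rewrite (eq_big_seq (fun m => (m == n) * m + (m * m.-1 * nreps (n - m) + m * nzeros (n - m)))).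
  by rewrite big_split (sum_iota_last id) // big_split /= addnA.
move=> m /[!mem_iota] /andP [m_gt0 _].
rewrite (eq_big_seq (fun=> m * 1)); last by move=> t /(zeros_with_zeros m_gt0) ->; rewrite muln1.
by rewrite -big_distrr sum1_size size_with_zeros //=; lia.
Qed.

Lemma conv_S w Y n : conv w Y n.+1 = w 1 * Y n + conv (fun m => w m.+1) Y n.
Proof.
rewrite /conv /= big_cons subn1 /=; congr (_ + _).
by rewrite (iotaDl 1 1 n) big_map; apply: eq_bigr => m _; rewrite add1n subSS.
Qed.

Lemma conv_ext w1 w2 Y n : (forall m, 0 < m -> w1 m = w2 m) -> conv w1 Y n = conv w2 Y n.
Proof.
by move=> eq_w; apply: eq_big_seq => m /[!mem_iota] /andP [m_gt0 _]; rewrite eq_w.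
Qed.

Lemma conv_add w1 w2 Y n : conv (fun m => w1 m + w2 m) Y n = conv w1 Y n + conv w2 Y n.
Proof. by rewrite /conv -big_split; apply: eq_bigr => m _; rewrite mulnDl. Qed.

(* Consecutive convolutions against the weights [1], [m] and [m (m - 1)]
   differ by lower-order ones: taking differences removes the convolutions. *)
Lemma conv_steps Y n :
  [/\ conv (fun=> 1) Y n.+1 = Y n + conv (fun=> 1) Y n,
      conv id Y n.+1 = Y n + conv id Y n + conv (fun=> 1) Y n
    & conv (fun m => m * m.-1) Y n.+1 = conv (fun m => m * m.-1) Y n + 2 * conv id Y n].
Proof.
split; rewrite conv_S ?mul1n ?mul0n ?add0n //.
  by rewrite -addnA -conv_add; congr (_ + _); apply: conv_ext => m _; lia.
have -> : 2 * conv id Y n = conv (fun m => m + m) Y n by rewrite conv_add; lia.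
by rewrite -conv_add; apply: conv_ext => -[|m] //= _; lia.
Qed.

(* The block decomposition at size [n], with [conv predn] rewritten as
   [conv id - conv 1]. *)
Lemma block_identities n : 0 < n ->
  [/\ nreps n + conv (fun=> 1) nreps n = 1 + conv id nreps n + conv (fun=> 1) nzeros n
    & nzeros n = n + conv (fun m => m * m.-1) nreps n + conv id nzeros n].
Proof.
move=> n_gt0; split; last exact: nzeros_rec.
have pred_id : conv predn nreps n + conv (fun=> 1) nreps n = conv id nreps n.
  by rewrite -conv_add; apply: conv_ext => m m_gt0; lia.
by rewrite nreps_rec // -pred_id; lia.
Qed.

(* Eliminating the five auxiliary convolutions from the relations at sizes
   n .. n + 4 leaves a recurrence for [nreps] alone; equivalently, the
   generating function satisfies (1 - 5x + 7x^2 - 4x^3) S(x) = x (1 - x)^3. *)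
Lemma nreps_recurrence n : 0 < n ->
  (nreps n.+4)%:Z = (5 * (nreps n.+3)%:Z - 7 * (nreps n.+2)%:Z + 4 * (nreps n.+1)%:Z)%R.
Proof.
move=> n_gt0.
have [? ?] := block_identities n_gt0.
have [? ?] := block_identities (ltn0Sn n).
have [? ?] := block_identities (ltn0Sn n.+1).
have [? ?] := block_identities (ltn0Sn n.+2).
have [? ?] := block_identities (ltn0Sn n.+3).
have [? ? ?] := conv_steps nreps n.
have [? ? ?] := conv_steps nreps n.+1.
have [? ? ?] := conv_steps nreps n.+2.
have [? ? ?] := conv_steps nreps n.+3.
have [? ? ?] := conv_steps nzeros n.
have [? ? ?] := conv_steps nzeros n.+1.
have [? ? ?] := conv_steps nzeros n.+2.
have [? ? ?] := conv_steps nzeros n.+3.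
lia.
Qed.

Lemma nreps_small : [/\ nreps 1 = 1, nreps 2 = 2, nreps 3 = 6 & nreps 4 = 19].
Proof. by []. Qed.

End Counting.

Theorem corollary4p3 :
  exists a : nat -> nat,
    (forall n : nat, (1 <= n)%N -> pd_num_classes n (a n)) /\
    a 1%N = 1%N /\ a 2%N = 2%N /\ a 3%N = 6%N /\ a 4%N = 19%N /\
    (forall n : nat, (5 <= n)%N ->
       (a n)%:Z = 5 * (a (n - 1)%N)%:Z - 7 * (a (n - 2)%N)%:Z + 4 * (a (n - 3)%N)%:Z).
Proof.
exists nreps; split; first exact: pd_num_classes_reps.
have [-> -> -> ->] := nreps_small; do 4 (split; first by []).
move=> n n_ge5; have -> : n = (n - 4).+4 by lia.
rewrite !subSS !subn0; apply: nreps_recurrence; lia.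
Qed.
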